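(* Let $n\geq 1$, let $\pi\in S_n$ be a 321-avoiding permutation and let $A_\pi$ be the associated linear Nakayama algebra (with $n+1$ simple modules) with Jacobson radical $J$. Then $\operatorname{Ext}^1_{A_\pi}(J,J)\cong K^{\mathfrak{s}(\pi)}$ as $K$-vector spaces.
   Context: $K$ is a field. A linear Nakayama algebra with $m$ simple modules is a connected algebra $A=KQ/I$ with $Q$ the quiver $0\to1\to\cdots\to m-1$ and $I$ admissible; modules are finite-dimensional right modules, $J$ is the Jacobson radical of $A$ viewed as right module. The indecomposable projective $e_iA$ is uniserial with composition factors $S_i,\dots,S_{i+c_i-1}$, $c_i=\dim_K e_iA$, and $A$ is determined by $[c_0,\dots,c_{m-1}]$. For $m=n+1$, the Dyck path $\mathcal D_A$ of $A$ is the lattice path from $(0,0)$ to $(2n,0)$ whose vertex with first coordinate $x$ has height $h(x)=\max\{k-1: 0\le i\le n,\ 1\le k\le c_i,\ 2i+k-1=2n-x\}$; this is a bijection between isomorphism classes of such algebras and Dyck paths of semilength $n$. Billey–Jockusch–Stanley bijection: for a Dyck path $u^{a_1}d^{d_1}\cdots u^{a_\ell}d^{d_\ell}$ ($a_i,d_i\ge1$) put $A_j=a_1+\dots+a_j$, $D_j=d_1+\dots+d_j$ ($1\le j\le\ell-1$), set $\pi(D_j)=A_j+1$ and fill the remaining positions in increasing order with the remaining values of $[n]$; this is a bijection onto 321-avoiding permutations of $[n]$. $A_\pi$ is the linear Nakayama algebra whose Dyck path corresponds to $\pi$. Support size: $\mathfrak s(\pi)$ is the number of distinct simple transpositions $s_i=(i,i+1)$,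 $1\le i\le n-1$, occurring in a reduced (minimal length) expression of $\pi$ as a product of the $s_i$. *)

From HB Require Import structures.
From mathcomp Require Import all_boot all_order all_algebra all_fingroup.

Set Implicit Arguments.
Unset Strict Implicit.
Unset Printing Implicit Defensive.

Import GRing.Theory.

(* A linear Nakayama algebra with m = size c simple modules is given by its *)
(* Kupisch series c = [c_0; ...; c_{m-1}], c_i = dim e_i A.  For m = n+1,   *)
(* the conditions below characterise the sequences that arise from a        *)
(* connected algebra K Q / I, Q = 0 -> 1 -> ... -> n, I admissible:         *)
(*   c_n = 1 (the sink), c_i >= 2 for i < n (arrows are not in I),          *)
(*   c_{i+1} >= c_i - 1 (e_{i+1}A is a quotient-free continuation).          *)
Definition linNakayama (n : nat) (c : seq nat) : Prop :=
  [/\ size c = n.+1, nth 0 c n = 1,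
      (forall i, i < n -> 2 <= nth 0 c i)
    & (forall i, i < n -> (nth 0 c i).-1 <= nth 0 c i.+1)].

(* A (finite-dimensional right) module M is given by d j = dim M e_j and    *)
(* the action of the arrow j -> j+1 as a matrix f j : M e_j -> M e_{j+1}    *)
(* acting on row vectors (right action).  d j = 0 for j outside the quiver. *)
(* The ideal I is generated by the paths of length c_i starting at i, so M  *)
(* is an A-module iff those paths act as zero.                              *)
Definition pathmx (K : fieldType) (d : nat -> nat)
  (f : forall j, 'M[K]_(d j, d j.+1)) (i : nat) :
  forall k : nat, 'M[K]_(d i, d (k + i)) :=
  fix p (k : nat) : 'M[K]_(d i, d (k + i)) :=
    match k return 'M[K]_(d i, d (k + i)) with
    | 0 => ((1%:M)%R : 'M[K]_(d i))
    | k'.+1 => (p k' *m f (k' + i))%R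
    end.

Definition isModule (K : fieldType) (c : seq nat) (d : nat -> nat)
  (f : forall j, 'M[K]_(d j, d j.+1)) : Prop :=
  (forall j, size c <= j -> d j = 0) /\
  (forall i, i < size c -> pathmx f i (nth 0 c i) = 0%R).

(* The Jacobson radical J of A_A = (+)_i e_i A.  The vertex-j part J e_j    *)
(* has as basis the (nonzero) paths i -> j of positive length, indexed by  *)
(* their start i, i.e. the i with i < j < i + c_i; the arrow j -> j+1 maps *)
(* the path from i to the path from i (or to 0 if that path is in I).       *)
Definition radS (c : seq nat) (j : nat) : seq nat :=
  [seq i <- iota 0 (size c) | (i < j) && (j < i + nth 0 c i)].

Definition dimJ (c : seq nat) (j : nat) : nat := size (radS c j).

Definition actJ (K : fieldType) (c : seq nat) (j : nat) :
  'M[K]_(dimJ c j, dimJ c j.+1) :=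
  \matrix_(a < dimJ c j, b < dimJ c j.+1)
    (if nth 0 (radS c j) a == nth 0 (radS c j.+1) b then 1%R else 0%R).

(* An extension 0 -> N -> E -> M -> 0 is, up to equivalence, E e_j =        *)
(* N e_j (+) M e_j with arrow action [[fN j, 0], [g j, fM j]]; it is an     *)
(* A-module iff g is a "cocycle".  Equivalent extensions differ by a        *)
(* coboundary  g j = h j * fN j - fM j * h (j+1),  and Baer sum / scalar   *)
(* multiplication correspond to + and *: on g.  So Ext^1 = Z / B.           *)
Definition extDims (dM dN : nat -> nat) (j : nat) : nat := dN j + dM j.

Definition extAct (K : fieldType) (dM dN : nat -> nat)
  (fM : forall j, 'M[K]_(dM j, dM j.+1)) (fN : forall j, 'M[K]_(dN j, dN j.+1))
  (g : forall j, 'M[K]_(dM j, dN j.+1)) (j : nat) :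
  'M[K]_(extDims dM dN j, extDims dM dN j.+1) :=
  block_mx (fN j) 0%R (g j) (fM j).

Definition isCocycle (K : fieldType) (c : seq nat) (dM dN : nat -> nat)
  (fM : forall j, 'M[K]_(dM j, dM j.+1)) (fN : forall j, 'M[K]_(dN j, dN j.+1))
  (g : forall j, 'M[K]_(dM j, dN j.+1)) : Prop :=
  isModule c (extAct fM fN g).

Definition coboundary (K : fieldType) (dM dN : nat -> nat)
  (fM : forall j, 'M[K]_(dM j, dM j.+1)) (fN : forall j, 'M[K]_(dN j, dN j.+1))
  (h : forall j, 'M[K]_(dM j, dN j)) (j : nat) : 'M[K]_(dM j, dN j.+1) :=
  (h j *m fN j - fM j *m h j.+1)%R.

Definition Ext1_iso_Kpow (K : fieldType) (c : seq nat) (dM dN : nat -> nat)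
  (fM : forall j, 'M[K]_(dM j, dM j.+1)) (fN : forall j, 'M[K]_(dN j, dN j.+1))
  (s : nat) : Prop :=
  exists z : 'I_s -> forall j, 'M[K]_(dM j, dN j.+1),
    [/\ (forall k, isCocycle c fM fN (z k)),
        (forall g, isCocycle c fM fN g ->
           exists (a : 'I_s -> K) (h : forall j, 'M[K]_(dM j, dN j)),
             forall j, g j = (\sum_(k < s) a k *: z k j + coboundary fM fN h j)%R)
      & (forall (a : 'I_s -> K) (h : forall j, 'M[K]_(dM j, dN j)),
           (forall j, (\sum_(k < s) a k *: z k j)%R = coboundary fM fN h j) ->
           forall k, a k = 0%R)].

(* Dyck path of A (m = n+1): height of the vertex with first coordinate x: *)
(* h(x) = max { k-1 : 0 <= i <= n, 1 <= k <= c_i, 2i + k - 1 = 2n - x }.    *)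
(* (Written with k' = k - 1; the set is nonempty for 0 <= x <= 2n.)         *)
Definition dyck_height (n : nat) (c : seq nat) (x : nat) : nat :=
  \max_(i < n.+1) \max_(k < nth 0 c i)
     (if 2 * i + k == 2 * n - x then nat_of_ord k else 0).

(* At a valley x, the number of up steps before it is (x + h x)/2 and the  *)
(* number of down steps is (x - h x)/2.  These are exactly the pairs       *)
(* (D_j, A_j), 1 <= j <= l-1, of the decomposition u^a1 d^d1 ... u^al d^dl. *)
Definition valley (h : nat -> nat) (n x : nat) : Prop :=
  [/\ 0 < x < 2 * n, h x.-1 = (h x).+1 & h x.+1 = (h x).+1].

(* Billey-Jockusch-Stanley: pi(D_j) = A_j + 1 and the remaining positions  *)
(* are filled increasingly by the remaining values (0-indexed here:        *)
(* position p : 'I_n stands for p+1 in [n]).                                *)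
Definition valleyPos (h : nat -> nat) (n : nat) (p : nat) : Prop :=
  exists x, valley h n x /\ p.+1 = (x - h x)./2.

Definition BJS (n : nat) (h : nat -> nat) (pi : 'S_n) : Prop :=
  (forall x, valley h n x ->
     forall p : 'I_n, p.+1 = (x - h x)./2 -> (pi p).+1 = ((x + h x)./2).+1) /\
  (forall p q : 'I_n, p < q -> ~ valleyPos h n p -> ~ valleyPos h n q ->
     pi p < pi q).

Definition avoids321 (n : nat) (pi : 'S_n) : Prop :=
  forall i j k : 'I_n, i < j -> j < k -> ~ ((pi k < pi j) && (pi j < pi i)).

(* Words in the simple transpositions: a letter (a, b) with b = a + 1       *)
(* denotes s_{a+1} = (a+1, a+2) in 1-indexed notation.                      *)
Definition adj_word (n : nat) (w : seq ('I_n * 'I_n)) : bool :=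
  all (fun ab => val ab.2 == (val ab.1).+1) w.

Definition word_prod (n : nat) (w : seq ('I_n * 'I_n)) : 'S_n :=
  (\prod_(ab <- w) tperm ab.1 ab.2)%g.

Definition reduced_word (n : nat) (pi : 'S_n) (w : seq ('I_n * 'I_n)) : Prop :=
  [/\ adj_word w, word_prod w = pi &
      forall w', adj_word w' -> word_prod w' = pi -> size w <= size w'].

(* support size s(pi) computed from a reduced word w: number of distinct   *)
(* simple transpositions occurring in w.                                    *)
Definition support_size_of (n : nat) (w : seq ('I_n * 'I_n)) : nat :=
  size (undup w).

(* Ext^1(J, J) is computed as cocycles modulo coboundaries of
   extensions of representations of the linear quiver.  In the basis of J e_j
   given by the nonzero paths a -> j, the problem splits into one scalar
   problem for each pair (a, b) of path starts: it contributes exactly one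
   dimension when a is the last "jump" before b (an index where the end
   i + c_i of the projective e_i A strictly increases) and b < a + c_a, and
   nothing otherwise.  The jumps are the valleys of the Dyck path, so by the
   Billey-Jockusch-Stanley construction the labels b are the n - 1 - i such
   that pi moves some element of {0, ..., i} above i.  Since a reduced word
   only ever adds inversions, these i are exactly the indices of the simple
   transpositions occurring in a reduced word of pi. *)

From HB Require Import structures.
From mathcomp Require Import all_boot all_order all_algebra all_fingroup.
From mathcomp Require Import zify ring.
From Stdlib Require Import Classical.

Set Implicit Arguments.
Unset Strict Implicit.
Unset Printing Implicit Defensive.

Import GRing.Theory.

Definition proj_end (c : seq nat) (i : nat) : nat := i + nth 0 c i.

Section RadicalCoordinates.
Variables (K : fieldType) (c : seq nat).
Local Open Scope ring_scope.

Definition in_rad (j a : nat) : bool := (a < j < proj_end c a)%N.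

Lemma mem_radS j a : (a \in radS c j) = in_rad j a.
Proof.
rewrite mem_filter mem_iota add0n /in_rad /proj_end /=.
case: (ltnP a (size c)) => [|a_big]; first by rewrite andbT.
by rewrite nth_default // addn0 andbF; apply/esym/negbTE; lia.
Qed.

Lemma uniq_radS j : uniq (radS c j).
Proof. by rewrite filter_uniq // iota_uniq. Qed.

(* Rows and columns of a matrix between vertex spaces of J are labelled by the
   starts a of the paths a -> j; [entry M a b] reads M at labels a, b, and is
   0 when a label does not occur. *)
Definition entry j1 j2 (M : 'M[K]_(dimJ c j1, dimJ c j2)) (a b : nat) : K :=
  match (insub (index a (radS c j1)) : option 'I_(dimJ c j1)),
        (insub (index b (radS c j2)) : option 'I_(dimJ c j2)) with
  | Some r, Some s => M r s
  | _, _ => 0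
  end.

Lemma entryE j1 j2 (M : 'M[K]_(dimJ c j1, dimJ c j2)) (r : 'I_(dimJ c j1)) (s : 'I_(dimJ c j2)) :
  entry M (nth 0%N (radS c j1) r) (nth 0%N (radS c j2) s) = M r s.
Proof. by rewrite /entry !index_uniq ?uniq_radS // !valK. Qed.

Lemma entry_out j1 j2 (M : 'M[K]_(dimJ c j1, dimJ c j2)) a b :
  ~~ (in_rad j1 a && in_rad j2 b) -> entry M a b = 0.
Proof.
rewrite -!mem_radS negb_and /entry => /orP[] a_out.
  by rewrite insubN // -leqNgt memNindex.
by case: insub => // r; rewrite insubN // -leqNgt memNindex.
Qed.

Variant entry_spec j1 j2 (a b : nat) : Prop :=
  | EntryIn (r : 'I_(dimJ c j1)) (s : 'I_(dimJ c j2)) of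
      a = nth 0%N (radS c j1) r & b = nth 0%N (radS c j2) s
  | EntryOut of ~~ (in_rad j1 a && in_rad j2 b).

Lemma entryP j1 j2 a b : entry_spec j1 j2 a b.
Proof.
have [/andP[]|] := boolP (in_rad j1 a && in_rad j2 b); last exact: EntryOut.
rewrite -!mem_radS => a_in b_in.
have ra : (index a (radS c j1) < dimJ c j1)%N by rewrite index_mem.
have sb : (index b (radS c j2) < dimJ c j2)%N by rewrite index_mem.
by apply: (@EntryIn _ _ _ _ (Ordinal ra) (Ordinal sb)); rewrite /= nth_index.
Qed.

Lemma matrix_entryP j1 j2 (M N : 'M[K]_(dimJ c j1, dimJ c j2)) :
  (forall a b, entry M a b = entry N a b) -> M = N.
Proof. by move=> eqMN; apply/matrixP => r s; rewrite -!entryE. Qed.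

Lemma entry0 j1 j2 a b : entry (0 : 'M[K]_(dimJ c j1, dimJ c j2)) a b = 0.
Proof. by case: (entryP j1 j2 a b) => [r s -> ->|out]; rewrite ?entryE ?mxE ?entry_out. Qed.

Lemma entryD j1 j2 (M N : 'M[K]_(dimJ c j1, dimJ c j2)) a b :
  entry (M + N) a b = entry M a b + entry N a b.
Proof. by case: (entryP j1 j2 a b) => [r s -> ->|out]; rewrite ?entryE ?mxE ?entry_out ?addr0. Qed.

Lemma entryN j1 j2 (M : 'M[K]_(dimJ c j1, dimJ c j2)) a b :
  entry (- M) a b = - entry M a b.
Proof. by case: (entryP j1 j2 a b) => [r s -> ->|out]; rewrite ?entryE ?mxE ?entry_out ?oppr0. Qed.

Lemma entryB j1 j2 (M N : 'M[K]_(dimJ c j1, dimJ c j2)) a b :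
  entry (M - N) a b = entry M a b - entry N a b.
Proof. by rewrite entryD entryN. Qed.

Lemma entryZ j1 j2 x (M : 'M[K]_(dimJ c j1, dimJ c j2)) a b :
  entry (x *: M) a b = x * entry M a b.
Proof. by case: (entryP j1 j2 a b) => [r s -> ->|out]; rewrite ?entryE ?mxE ?entry_out ?mulr0. Qed.

Lemma entry_sum j1 j2 m (F : 'I_m -> 'M[K]_(dimJ c j1, dimJ c j2)) a b :
  entry (\sum_(k < m) F k) a b = \sum_(k < m) entry (F k) a b.
Proof. by elim/big_rec2: _ => [|k x M _ <-]; rewrite ?entry0 ?entryD. Qed.

Lemma entry_mulmx j1 j2 j3 (M : 'M[K]_(dimJ c j1, dimJ c j2))
    (N : 'M[K]_(dimJ c j2, dimJ c j3)) a b :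
  entry (M *m N) a b = \sum_(x <- radS c j2) entry M a x * entry N x b.
Proof.
case: (entryP j1 j3 a b) => [r s -> ->|out].
  by rewrite entryE mxE (big_nth 0%N) big_mkord; apply: eq_bigr => t _; rewrite !entryE.
rewrite entry_out // big1_seq // => x _; move: out; rewrite negb_and => /orP[] out.
  by rewrite [entry M _ _]entry_out ?mul0r // negb_and out.
by rewrite [entry N _ _]entry_out ?mulr0 // negb_and out orbT.
Qed.

Definition labelmx j1 j2 (F : nat -> nat -> K) : 'M[K]_(dimJ c j1, dimJ c j2) :=
  \matrix_(r, s) F (nth 0%N (radS c j1) r) (nth 0%N (radS c j2) s).

Lemma entry_labelmx j1 j2 F a b :
  entry (labelmx j1 j2 F) a b = if in_rad j1 a && in_rad j2 b then F a b else 0.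
Proof.
case: (entryP j1 j2 a b) => [r s -> ->|out]; last by rewrite entry_out // (negbTE out).
by rewrite entryE mxE -!mem_radS !mem_nth.
Qed.

Lemma sum_rad_delta j a (F : nat -> K) :
  \sum_(x <- radS c j) (if a == x then F x else 0) = if in_rad j a then F a else 0.
Proof.
rewrite -mem_radS; case: ifP => [a_in|a_out].
  rewrite (bigD1_seq a) ?uniq_radS //= eqxx big1 ?addr0 // => x /negbTE.
  by rewrite eq_sym => ->.
by rewrite big1_seq // => x /andP[_ x_in]; case: eqP => // a_x; rewrite a_x x_in in a_out.
Qed.

Lemma entry_actJ j a b :
  entry (actJ K c j) a b = if [&& in_rad j a, in_rad j.+1 b & a == b] then 1 else 0.
Proof.
case: (entryP j j.+1 a b) => [r s -> ->|out].
  by rewrite entryE mxE -!mem_radS !mem_nth.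
by rewrite entry_out //; case: and3P out => // [[-> ->]].
Qed.

Lemma entry_mulmx_actJr j1 j (M : 'M[K]_(dimJ c j1, dimJ c j)) a b :
  entry (M *m actJ K c j) a b = if in_rad j.+1 b then entry M a b else 0.
Proof.
rewrite entry_mulmx (eq_bigr (fun x => if b == x then
    (if in_rad j b && in_rad j.+1 b then entry M a b else 0) else 0)); last first.
  move=> x _; rewrite entry_actJ eq_sym; case: eqP => [->|_]; last by rewrite !andbF mulr0.
  by rewrite andbT; case: ifP; rewrite ?mulr1 ?mulr0.
rewrite sum_rad_delta; case: (boolP (in_rad j b)) => //= b_out.
by rewrite entry_out ?if_same // negb_and b_out orbT.
Qed.

Lemma entry_mulmx_actJl j j2 (M : 'M[K]_(dimJ c j.+1, dimJ c j2)) a b :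
  entry (actJ K c j *m M) a b = if in_rad j a then entry M a b else 0.
Proof.
rewrite entry_mulmx (eq_bigr (fun x => if a == x then
    (if in_rad j a && in_rad j.+1 a then entry M a b else 0) else 0)); last first.
  move=> x _; rewrite entry_actJ; case: eqP => [<-|_]; last by rewrite !andbF mul0r.
  by rewrite andbT; case: ifP; rewrite ?mul1r ?mul0r.
rewrite sum_rad_delta andbC; case: (boolP (in_rad j.+1 a)) => //= a_out.
by rewrite entry_out ?if_same // negb_and a_out.
Qed.

End RadicalCoordinates.

Section ExtensionPaths.
Variables (K : fieldType) (dM dN : nat -> nat).
Variables (fM : forall j, 'M[K]_(dM j, dM j.+1)) (fN : forall j, 'M[K]_(dN j, dN j.+1)).
Variable g : forall j, 'M[K]_(dM j, dN j.+1).
Local Open Scope ring_scope.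

Fixpoint extpath_dl (i k : nat) : 'M[K]_(dM i, dN (k + i)) :=
  match k return 'M[K]_(dM i, dN (k + i)) with
  | 0 => 0
  | k'.+1 => extpath_dl i k' *m fN (k' + i) + pathmx fM i k' *m g (k' + i)
  end.

Lemma pathmx_extAct i k :
  pathmx (extAct fM fN g) i k =
  block_mx (pathmx fN i k) 0 (extpath_dl i k) (pathmx fM i k).
Proof.
elim: k => [|k IHk] /=; first by rewrite scalar_mx_block.
by rewrite IHk /extAct mulmx_block !mulmx0 !mul0mx !addr0 !add0r.
Qed.

End ExtensionPaths.

Section PathsInJ.
Variables (K : fieldType) (c : seq nat).
Local Open Scope ring_scope.

Lemma in_rad_between i j k a :
  in_rad c i a -> in_rad c j a -> (i <= k <= j)%N -> in_rad c k a.
Proof. by rewrite /in_rad; lia. Qed.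

Lemma entry_pathmx_mull i k j2 (M : 'M[K]_(dimJ c (k + i), dimJ c j2)) a b :
  entry (pathmx (actJ K c) i k *m M) a b = if in_rad c i a then entry M a b else 0.
Proof.
elim: k M => [|k IHk] M /=.
  by rewrite mul1mx; case: ifPn => // a_out; rewrite entry_out // negb_and a_out.
rewrite -mulmxA IHk entry_mulmx_actJl; case: (boolP (in_rad c i a)) => //= a_i.
case: (boolP (in_rad c (k + i) a)) => // a_out; rewrite entry_out // negb_and.
apply/orP; left; apply: contra a_out => a_k; apply: (in_rad_between a_i a_k); lia.
Qed.

Lemma entry_extpath_dl (g : forall j, 'M[K]_(dimJ c j, dimJ c j.+1)) i k a b :
  entry (extpath_dl (actJ K c) (actJ K c) g i k) a b =
  if in_rad c i a && in_rad c (k + i) b then \sum_(t < k) entry (g (t + i)%N) a b else 0.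
Proof.
elim: k b => [|k IHk] b /=; first by rewrite entry0 big_ord0 if_same.
rewrite entryD entry_mulmx_actJr IHk entry_pathmx_mull big_ord_recr /=.
change (k.+1 + i)%N with (k + i).+1.
case: (boolP (in_rad c i a)) => a_i /=; last by rewrite !if_same addr0.
case: (boolP (in_rad c (k + i).+1 b)) => b_k1 /=; last first.
  by rewrite entry_out ?addr0 ?if_same // negb_and b_k1 orbT.
case: (boolP (in_rad c (k + i) b)) => b_k //=.
have b_eq : b = (k + i)%N by move: b_k b_k1; rewrite /in_rad; lia.
rewrite big1 ?add0r // => t _; rewrite entry_out // negb_and; apply/orP; right.
by rewrite /in_rad b_eq; have := ltn_ord t; lia.
Qed.

End PathsInJ.

Section LinearNakayama.
Variables (n : nat) (c : seq nat).
Hypothesis Hc : linNakayama n c.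

Local Notation pend := (proj_end c).

Lemma nakayama_size : size c = n.+1. Proof. by case: Hc. Qed.

Lemma nakayama_last : nth 0 c n = 1. Proof. by case: Hc. Qed.

Lemma nakayama_ge2 i : i < n -> 2 <= nth 0 c i.
Proof. by case: Hc => _ _ + _; apply. Qed.

Lemma nakayama_out i : n < i -> nth 0 c i = 0.
Proof. by move=> n_lt_i; rewrite nth_default // nakayama_size. Qed.

Lemma proj_end_step i : pend i <= pend i.+1.
Proof.
case: Hc => _ c_n _ c_step; rewrite /proj_end; case: (ltngtP i n) => [/c_step|n_lt|->].
- lia.
- by rewrite !nakayama_out //; lia.
- by rewrite c_n nakayama_out //; lia.
Qed.

Lemma proj_end_mono : {homo pend : i j / i <= j}.
Proof. exact: homo_leq leqnn leq_trans proj_end_step. Qed.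

Lemma proj_end_le i : i <= n -> pend i <= n.+1.
Proof. by move/proj_end_mono/leq_trans; apply; rewrite /proj_end nakayama_last addn1. Qed.

Lemma proj_end_gt i : i < n -> i.+2 <= pend i.
Proof. by move/nakayama_ge2; rewrite /proj_end; lia. Qed.

Lemma in_rad_lt j a : in_rad c j a -> a < n.
Proof.
rewrite /in_rad /proj_end; case: (ltngtP a n) => // [n_lt|->]; last by rewrite nakayama_last; lia.
by rewrite nakayama_out //; lia.
Qed.

Lemma dimJ_out j : n < j -> dimJ c j = 0.
Proof.
move=> n_lt_j; apply/eqP; rewrite /dimJ /radS size_filter -leqn0 leqNgt -has_count.
apply/hasP => -[a]; rewrite mem_iota nakayama_size => /andP[_ a_le] /andP[lt_aj].
by have := proj_end_le a_le; rewrite /proj_end; lia.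
Qed.

End LinearNakayama.

Section CocyclesOfJ.
Variables (K : fieldType) (n : nat) (c : seq nat).
Hypothesis Hc : linNakayama n c.

Local Notation J := (actJ K c).

Lemma pathmx_actJ_vanish i : i <= n -> pathmx J i (nth 0 c i) = 0%R.
Proof.
move=> i_le; have [k c_i] : exists k, nth 0 c i = k.+1.
  exists (nth 0 c i).-1; case: (ltngtP i n) i_le => [/(nakayama_ge2 Hc)|//|->]; last first.
    by rewrite (nakayama_last Hc).
  by case: (nth 0 c i).
rewrite c_i /=; apply: matrix_entryP => a b; rewrite entry0 entry_pathmx_mull entry_actJ.
case: (boolP (in_rad c i a)) => //= a_i; case: eqP; rewrite ?andbF // => <-.
suff: ~~ in_rad c (k + i).+1 a by move/negbTE->; rewrite andbF.
have := proj_end_mono Hc (ltnW (proj1 (andP a_i))); move: a_i.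
by rewrite /in_rad /proj_end c_i; lia.
Qed.

Definition cocycle_sums (g : forall j, 'M[K]_(dimJ c j, dimJ c j.+1)) : Prop :=
  forall i a b, i <= n -> in_rad c i a -> in_rad c (proj_end c i) b ->
    (\sum_(i <= t < proj_end c i) entry (g t) a b = 0)%R.

Lemma sum_proj_path (F : nat -> K) i :
  (\sum_(i <= t < proj_end c i) F t = \sum_(t < nth 0 c i) F (t + i)%N)%R.
Proof. by rewrite -{1}(add0n i) big_addn /proj_end addKn big_mkord. Qed.

Lemma isCocycle_actJP g : isCocycle c J J g <-> cocycle_sums g.
Proof.
rewrite /isCocycle /isModule (nakayama_size Hc).
split=> [[_ path0] i a b i_le a_i b_end | sums].
  have /eqP := path0 i i_le; rewrite pathmx_extAct block_mx_eq0 => /and4P[_ _ /eqP dl0 _].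
  have := congr1 (fun M => entry M a b) dl0.
  by rewrite entry_extpath_dl entry0 a_i addnC b_end sum_proj_path.
split=> [j n_lt_j | i i_le]; first by rewrite /extDims !(dimJ_out Hc n_lt_j).
rewrite pathmx_extAct !pathmx_actJ_vanish //.
have -> : extpath_dl J J g i (nth 0 c i) = 0%R.
  apply: matrix_entryP => a b; rewrite entry_extpath_dl entry0.
  case: ifP => // /andP[a_i b_end].
  rewrite -(sum_proj_path (fun t => entry (g t) a b)); apply: sums => //.
  by rewrite /proj_end addnC.
by rewrite block_mx0.
Qed.

End CocyclesOfJ.

Lemma sum_nat_support (V : nmodType) (F : nat -> V) m n lo hi :
  m <= lo -> hi <= n -> (forall t, m <= t < n -> ~~ (lo <= t < hi) -> F t = 0%R) ->
  (\sum_(m <= t < n) F t = \sum_(lo <= t < hi) F t)%R.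
Proof.
move=> m_lo hi_n F0; rewrite [LHS](bigID (fun t => lo <= t < hi)) /=.
rewrite [X in (_ + X)%R]big1_seq ?addr0; last first.
  by move=> t /andP[t_out]; rewrite mem_index_iota => /F0; apply.
case: (leqP lo hi) => [lo_hi|hi_lt]; last first.
  by rewrite [RHS]big_geq ?(ltnW hi_lt) // big1 // => t; lia.
by rewrite [RHS](big_nat_widenl _ m) // [RHS](big_nat_widen _ _ n).
Qed.

Definition jump (c : seq nat) (a : nat) : bool := proj_end c a < proj_end c a.+1.

Definition ext_label (n : nat) (c : seq nat) (b : nat) : bool :=
  [exists a : 'I_n, jump c a && (a < b < proj_end c a)].

Definition last_jump (n : nat) (c : seq nat) (b : nat) : nat :=
  \max_(a < n | jump c a && (a < b)) a.

Definition ext_pair (n : nat) (c : seq nat) (a b : nat) : bool :=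
  [&& a < n, jump c a, a < b, b < proj_end c a & proj_end c a.+1 == proj_end c b].

Section Jumps.
Variables (n : nat) (c : seq nat).
Hypothesis Hc : linNakayama n c.

Local Notation pend := (proj_end c).
Local Notation jump := (jump c).
Local Notation ext_label := (ext_label n c).
Local Notation last_jump := (last_jump n c).
Local Notation ext_pair := (ext_pair n c).

Lemma last_jumpP b : ext_label b ->
  [/\ last_jump b < n, jump (last_jump b), last_jump b < b, b < pend (last_jump b)
    & forall a, a < n -> jump a -> a < b -> a <= last_jump b].
Proof.
case/existsP => a0 /and3P[jump_a0 a0_b b_a0].
have le_last a : a < n -> jump a -> a < b -> a <= last_jump b.
  by move=> a_n jump_a a_b; apply: (leq_bigmax_cond (Ordinal a_n)); rewrite /= jump_a.
have [|a1] := @eq_bigmax_cond _ [pred a : 'I_n | jump a && (a < b)] val.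
  by apply/card_gt0P; exists a0; rewrite inE jump_a0.
rewrite inE => /andP[jump_a1 a1_b] max_eq.
have last_eq : last_jump b = a1 by rewrite /last_jump -max_eq.
rewrite last_eq; split=> //; last by rewrite -last_eq.
apply: (leq_trans b_a0); apply: (proj_end_mono Hc).
by have := le_last a0 (ltn_ord a0) jump_a0 a0_b; rewrite last_eq.
Qed.

Lemma proj_end_flat a b :
  a <= b -> (forall t, a <= t < b -> ~~ jump t) -> pend a = pend b.
Proof.
move=> /subnKC <-; elim: (b - a) => [|d IHd] flat; first by rewrite addn0.
rewrite IHd => [|t /andP[a_t t_lt]]; last by apply: flat; rewrite a_t addnS ltnS ltnW.
rewrite addnS; apply/eqP; rewrite eqn_leq (proj_end_step Hc) leqNgt.
by apply: flat; rewrite leq_addr addnS ltnSn.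
Qed.

Lemma ext_pairE a b : ext_pair a b = ext_label b && (a == last_jump b).
Proof.
apply/idP/idP.
- case/and5P=> a_n jump_a a_b b_a /eqP end_eq.
  have lab_b : ext_label b by apply/existsP; exists (Ordinal a_n); rewrite /= jump_a a_b.
  have [_ jump_l l_b _ le_last] := last_jumpP lab_b.
  rewrite lab_b eqn_leq le_last //= leqNgt; apply/negP => a_l.
  have := proj_end_mono Hc a_l; have := proj_end_mono Hc l_b.
  by move: jump_l; rewrite /jump end_eq; lia.
- case/andP=> lab_b /eqP ->; have [l_n jump_l l_b b_l le_last] := last_jumpP lab_b.
  rewrite /ext_pair l_n jump_l l_b b_l; apply/eqP/proj_end_flat => // t /andP[l_t t_b].
  apply/negP => jump_t; have t_n : t < n.
    by have := proj_end_le Hc (ltnW l_n); lia.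
  by have := le_last t t_n jump_t t_b; lia.
Qed.

Lemma ext_pair_in_rad a b : ext_pair a b -> in_rad c b a && in_rad c b.+1 b.
Proof.
case/and5P=> _ jump_a a_b b_a /eqP end_eq.
by move: jump_a; rewrite /in_rad /jump end_eq; lia.
Qed.

Lemma ext_label_lt b : ext_label b -> b < n.
Proof.
case/existsP=> a /and3P[jump_a _ b_a]; have := proj_end_le Hc (ltn_ord a : a < n).
by move: jump_a; rewrite /jump; lia.
Qed.

End Jumps.

Section ScalarCochains.
Variables (K : fieldType) (n : nat) (c : seq nat).

Definition ext_class (G : nat -> K) (a : nat) : K := (\sum_(0 <= t < proj_end c a) G t)%R.

Definition ext_part (G : nat -> K) (a b t : nat) : K :=
  if ext_pair n c a b && (t == b) then ext_class G a else 0%R.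

Definition potential (G : nat -> K) (a b j : nat) : K :=
  (\sum_(0 <= t < j) (G t - ext_part G a b t))%R.

Definition primitive (G : nat -> K) (a b j : nat) : K :=
  if in_rad c j a && in_rad c j b then (- potential G a b j)%R else 0%R.

Variables (a b : nat) (G : nat -> K).
Hypothesis G_supp : forall t, ~~ (in_rad c t a && in_rad c t.+1 b) -> G t = 0%R.
Hypothesis G_cocycle : b < proj_end c a < proj_end c b -> ~~ ext_pair n c a b ->
  ext_class G a = 0%R.

Local Notation pend := (proj_end c).
Local Notation part := (ext_part G a b).
Local Notation pot := (potential G a b).
Local Notation prim := (primitive G a b).

Lemma ext_part_out t : ~~ (in_rad c t a && in_rad c t.+1 b) -> part t = 0%R.
Proof.
rewrite /ext_part; case: (boolP (ext_pair n c a b)) => //= pair_ab.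
by case: eqP => // ->; rewrite (ext_pair_in_rad pair_ab).
Qed.

Lemma potentialS j : pot j.+1 = (pot j + (G j - part j))%R.
Proof. by rewrite /potential big_nat_recr. Qed.

Lemma potential_low j : j <= b -> pot j = 0%R.
Proof.
move=> j_b; rewrite /potential big1_seq // => t; rewrite mem_index_iota => /andP[_ t_j].
have t_out : ~~ (in_rad c t a && in_rad c t.+1 b) by rewrite negb_and /in_rad; lia.
by rewrite G_supp // ext_part_out // subr0.
Qed.

Lemma potential_end : b < pend a < pend b -> pot (pend a) = 0%R.
Proof.
move=> b_ends; rewrite /potential sumrB -/(ext_class G a) /ext_part.
have [pair_ab|no_pair] := boolP (ext_pair n c a b); last first.
  by rewrite G_cocycle // big1 ?subr0.
rewrite -big_mkcond /= big_nat1_eq; case: ifP; rewrite ?subrr //.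
by move: b_ends; lia.
Qed.

(* The cocycle condition for (a, b) makes the potential vanish at both ends of
   the support of G, so [G - ext_part G a b] is the coboundary of
   [primitive G a b]. *)
Lemma scalar_cocycle_decomp j :
  G j = (part j + ((if in_rad c j.+1 b then prim j else 0)
                   - if in_rad c j a then prim j.+1 else 0))%R.
Proof.
have [/andP[a_j b_j1]|out] := boolP (in_rad c j a && in_rad c j.+1 b); last first.
  rewrite G_supp // ext_part_out // /primitive; move: out.
  by case: (in_rad c j a); case: (in_rad c j.+1 b); rewrite //= ?andbF subr0 add0r.
have pot_j : prim j = (- pot j)%R.
  rewrite /primitive; case: (boolP (in_rad c j b)) => [|b_j]; rewrite ?a_j //.
  by rewrite potential_low ?oppr0 //; move: b_j b_j1; rewrite /in_rad; lia.
have pot_j1 : prim j.+1 = (- pot j.+1)%R.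
  rewrite /primitive; case: (boolP (in_rad c j.+1 a)) => [|a_j1]; rewrite ?b_j1 //.
  have j1_end : j.+1 = pend a by move: a_j a_j1; rewrite /in_rad; lia.
  rewrite j1_end potential_end ?oppr0 //.
  by move: a_j b_j1; rewrite j1_end /in_rad; lia.
rewrite pot_j pot_j1 a_j b_j1 potentialS; ring.
Qed.

End ScalarCochains.

Lemma sum_enum_val_eq (V : nmodType) (T : finType) (A : {set T}) (F : T -> V) y :
  y \in A -> (\sum_(k < #|A|) (if enum_val k == y then F (enum_val k) else 0) = F y)%R.
Proof.
move=> yA; rewrite -(big_enum_val (fun x => if x == y then F x else 0%R)) /= -big_mkcondr.
by rewrite (big_pred1 y) // => x; rewrite /= andb_idl // => /eqP->.
Qed.

Section ExtOfJ.
Variables (K : fieldType) (n : nat) (c : seq nat).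
Hypothesis Hc : linNakayama n c.

Local Notation J := (actJ K c).
Local Notation pend := (proj_end c).
Local Notation ext_pair := (ext_pair n c).
Local Notation ext_label := (ext_label n c).
Local Notation last_jump := (last_jump n c).

Lemma cocycle_sums_pair (g : forall j, 'M[K]_(dimJ c j, dimJ c j.+1)) a b :
  cocycle_sums n g ->
  b < pend a < pend b -> ~~ ext_pair a b -> ext_class c (fun t => entry (g t) a b) a = 0%R.
Proof.
move=> sums /andP[b_a a_b] no_pair.
have [a_n|n_le_a] := ltnP a n; last first.
  rewrite /ext_class big1 // => t _; apply: entry_out.
  by apply: contraL n_le_a => /andP[/(in_rad_lt Hc)]; rewrite -ltnNge.
have supp m m' : m <= a.+1 -> pend a <= m' ->
    (\sum_(m <= t < m') entry (g t) a b = \sum_(a.+1 <= t < pend a) entry (g t) a b)%R.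
  move=> m_le le_m'; apply: sum_nat_support => // t _ t_out; apply: entry_out.
  by rewrite negb_and; apply/orP; left; move: t_out; rewrite /in_rad; lia.
have lt_ab : a < b by rewrite ltnNge; apply: contraL a_b => /(proj_end_mono Hc); rewrite -leqNgt.
have a1_b : pend a.+1 < pend b.
  rewrite ltn_neqAle (proj_end_mono Hc lt_ab) andbT; apply: contra no_pair => /eqP end_eq.
  by apply/and5P; split; rewrite // ?end_eq // /jump end_eq.
(* The sum is the cocycle condition along the path starting at a.+1. *)
rewrite /ext_class (supp 0) // -(supp a.+1 (pend a.+1)) ?(proj_end_step Hc) //.
apply: sums => //; rewrite /in_rad ?a1_b ?(leq_trans b_a (proj_end_step Hc a)) //.
by rewrite ltnSn; have := proj_end_gt Hc a_n; rewrite /proj_end; lia.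
Qed.

Definition ext_labels : {set 'I_n} := [set b : 'I_n | ext_label b].

Lemma ext_label_enum (k : 'I_#|ext_labels|) : ext_label (enum_val k).
Proof. by have := enum_valP k; rewrite inE. Qed.

Definition ext_basis (b j : nat) : 'M[K]_(dimJ c j, dimJ c j.+1) :=
  labelmx c j j.+1 (fun a b' => if [&& a == last_jump b, b' == b & j == b] then 1 else 0)%R.

Lemma entry_ext_basis b j a b' : ext_label b ->
  entry (ext_basis b j) a b' = (if [&& ext_pair a b', b' == b & j == b] then 1 else 0)%R.
Proof.
move=> lab_b; rewrite entry_labelmx.
case: (eqVneq b' b) => [->|]; last by rewrite !andbF if_same.
rewrite ext_pairE // lab_b /=; case: (eqVneq j b) => [->|]; last by rewrite !andbF if_same.
case: eqP => [->|_]; last by rewrite if_same.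
have pair_b : ext_pair (last_jump b) b by rewrite ext_pairE // lab_b eqxx.
by rewrite (ext_pair_in_rad pair_b).
Qed.

Lemma ext_basis_cocycle b : ext_label b -> isCocycle c J J (ext_basis b).
Proof.
move=> lab_b; apply/(isCocycle_actJP Hc) => i a b' i_le a_i b'_end.
rewrite big1_seq // => t _; rewrite entry_ext_basis //.
case: (boolP (ext_pair a b')) => //= /and5P[_ _ _ _ /eqP end_eq].
move: b'_end end_eq (proj_end_mono Hc (proj1 (andP a_i) : a < i)).
by rewrite /in_rad; lia.
Qed.

Lemma entry_coboundary (h : forall j, 'M[K]_(dimJ c j, dimJ c j)) j a b :
  entry (coboundary J J h j) a b =
  ((if in_rad c j.+1 b then entry (h j) a b else 0)
   - if in_rad c j a then entry (h j.+1) a b else 0)%R.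
Proof. by rewrite entryB entry_mulmx_actJr entry_mulmx_actJl. Qed.

Lemma ext_class_coboundary (h : forall j, 'M[K]_(dimJ c j, dimJ c j)) a b : ext_pair a b ->
  ext_class c (fun j => entry (coboundary J J h j) a b) a = 0%R.
Proof.
case/and5P=> _ jump_a a_b b_a /eqP end_eq; move: jump_a; rewrite /jump end_eq => a_end.
rewrite /ext_class (telescope_sumr_eq (fun j => - entry (h j) a b)%R) //; last first.
  move=> j /andP[_ j_a]; rewrite entry_coboundary.
  have -> : (if in_rad c j.+1 b then entry (h j) a b else 0)%R = entry (h j) a b.
    case: ifP => // b_j1; apply/esym/entry_out.
    by move: b_j1 a_end j_a; rewrite /in_rad; lia.
  have -> : (if in_rad c j a then entry (h j.+1) a b else 0)%R = entry (h j.+1) a b.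
    case: ifP => // a_j; apply/esym/entry_out.
    by move: a_j a_b j_a; rewrite /in_rad; lia.
  by rewrite opprK addrC.
by rewrite !entry_out ?oppr0 ?addr0 // /in_rad /proj_end; lia.
Qed.

Lemma ext_class_basis b a b' : ext_label b -> ext_pair a b' ->
  ext_class c (fun j => entry (ext_basis b j) a b') a = (if b' == b then 1 else 0)%R.
Proof.
move=> lab_b pair_ab; rewrite /ext_class.
under eq_bigr do rewrite entry_ext_basis // pair_ab /=.
have [b'_b|_] := eqVneq b' b; last by rewrite big1.
move: pair_ab; rewrite b'_b => pair_ab.
rewrite -big_mkcond big_nat1_eq; case/and5P: pair_ab => _ _ _ b_a _.
by rewrite leq0n b_a.
Qed.

Lemma ext_basis_span g : isCocycle c J J g ->
  exists (x : 'I_#|ext_labels| -> K) (h : forall j, 'M[K]_(dimJ c j, dimJ c j)),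
    forall j, g j = (\sum_(k < #|ext_labels|) x k *: ext_basis (enum_val k) j
                     + coboundary J J h j)%R.
Proof.
move=> /(isCocycle_actJP Hc) sums; pose G a b t := entry (g t) a b.
exists (fun k : 'I_#|ext_labels| =>
  let b := val (enum_val k) in ext_class c (G (last_jump b) b) (last_jump b)).
exists (fun j => labelmx c j j (fun a b => - potential n c (G a b) a b j)%R).
move=> j; apply: matrix_entryP => a b.
have G_supp t : ~~ (in_rad c t a && in_rad c t.+1 b) -> G a b t = 0%R by apply: entry_out.
rewrite -/(G a b j) (scalar_cocycle_decomp G_supp (cocycle_sums_pair sums)).
rewrite entryD entry_sum entry_coboundary !entry_labelmx; congr (_ + _)%R.
rewrite /ext_part; have [pair_ab|no_pair] /= := boolP (ext_pair a b); last first.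
  rewrite big1 // => k _.
  by rewrite entryZ entry_ext_basis ?ext_label_enum ?(negbTE no_pair) ?mulr0.
have /andP[lab_b /eqP a_eq] : ext_label b && (a == last_jump b) by rewrite -ext_pairE.
pose bo := Ordinal (ext_label_lt Hc lab_b); symmetry.
transitivity (\sum_(k < #|ext_labels|)
  if enum_val k == bo then if j == b then ext_class c (G a b) a else 0 else 0)%R.
  apply: eq_bigr => k _; rewrite entryZ entry_ext_basis ?ext_label_enum // pair_ab.
  rewrite -(inj_eq val_inj) /= [b == _]eq_sym.
  case: eqP => [k_b|_]; last by rewrite mulr0.
  by rewrite k_b -a_eq /=; case: (j == b); rewrite ?mulr1 ?mulr0.
by apply: (sum_enum_val_eq (fun=> _)); rewrite inE.
Qed.

Lemma ext_basis_free (x : 'I_#|ext_labels| -> K) (h : forall j, 'M[K]_(dimJ c j, dimJ c j)) :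
  (forall j, \sum_(k < #|ext_labels|) x k *: ext_basis (enum_val k) j = coboundary J J h j)%R ->
  forall k, x k = 0%R.
Proof.
move=> comb_eq k.
have pair_k : ext_pair (last_jump (enum_val k)) (enum_val k).
  by rewrite ext_pairE // ext_label_enum eqxx.
have basis_class (k' : 'I_#|ext_labels|) : (\sum_(0 <= t < pend (last_jump (enum_val k)))
    entry (ext_basis (enum_val k') t) (last_jump (enum_val k)) (enum_val k) =
    if enum_val k == enum_val k' then 1 else 0)%R.
  by rewrite -(inj_eq val_inj) -(ext_class_basis (ext_label_enum k') pair_k).
rewrite -(ext_class_coboundary h pair_k) /ext_class.
under eq_bigr do rewrite -comb_eq entry_sum.
rewrite exchange_big /=.
under eq_bigr => k' _ do under eq_bigr do rewrite entryZ.
under eq_bigr => k' _ do rewrite -mulr_sumr basis_class (inj_eq enum_val_inj).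
by rewrite (bigD1 k) //= eqxx mulr1 big1 ?addr0 // => k' k'_k; rewrite eq_sym (negbTE k'_k) mulr0.
Qed.

Theorem Ext1_actJ : Ext1_iso_Kpow c J J #|ext_labels|.
Proof.
exists (fun k : 'I_#|ext_labels| => ext_basis (enum_val k)); split.
- by move=> k; apply/ext_basis_cocycle/ext_label_enum.
- exact: ext_basis_span.
- exact: ext_basis_free.
Qed.

End ExtOfJ.

Lemma perm_stableC (T : finType) (p : {perm T}) (A : {set T}) :
  {in A, forall x, p x \in A} -> {in ~: A, forall x, p x \in ~: A}.
Proof.
move=> pA x; rewrite !inE; apply: contra => pxA.
have imA : p @: A = A.
  apply/eqP; rewrite eqEcard card_imset ?leqnn ?andbT //; last exact: perm_inj.
  by apply/subsetP => _ /imsetP[y yA ->]; apply: pA.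
by rewrite -imA mem_imset in pxA; last exact: perm_inj.
Qed.

Section Crossings.
Variable n : nat.
Implicit Types (p q : 'S_n) (i : nat).

Definition crosses p i : bool := [exists x : 'I_n, (x <= i) && (i < p x)].

Lemma crossesC p i : crosses p i = [exists y : 'I_n, (i < y) && (p y <= i)].
Proof.
pose L := [set x : 'I_n | x <= i].
have inL x : (x \in L) = (x <= i) by rewrite inE.
have inCL x : (x \in ~: L) = (i < x) by rewrite !inE ltnNge.
apply/idP/idP; apply: contraLR => /existsPn no_cross; apply/existsPn => x.
- have stable : {in ~: L, forall y, p y \in ~: L}.
    by move=> y; rewrite !inCL => y_i; move: (no_cross y); rewrite y_i -ltnNge.
  have := perm_stableC stable (x := x); rewrite setCK !inL => stab.
  by apply/negP => /andP[/stab]; rewrite leqNgt => /negbTE->.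
- have stable : {in L, forall y, p y \in L}.
    by move=> y; rewrite !inL => y_i; move: (no_cross y); rewrite y_i -leqNgt.
  have := perm_stableC stable (x := x); rewrite !inCL => stab.
  by apply/negP => /andP[/stab]; rewrite ltnNge => /negbTE->.
Qed.

End Crossings.

Section Inversions.
Variable n : nat.
Implicit Types (p q : 'S_n) (a b : 'I_n).

Definition inversions p : {set 'I_n * 'I_n} :=
  [set xy : 'I_n * 'I_n | (xy.1 < xy.2) && (p xy.2 < p xy.1)].

Definition ninv p : nat := #|inversions p|.

Definition pos_pair p a b : 'I_n * 'I_n :=
  let x := (p^-1)%g a in let y := (p^-1)%g b in if x < y then (x, y) else (y, x).

Lemma nat_of_tperm a b u : nat_of_ord (tperm a b u) =
  if u == a then nat_of_ord b else if u == b then nat_of_ord a else nat_of_ord u.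
Proof.
by case: tpermP => [->|->|/eqP/negbTE-> /eqP/negbTE->]; rewrite ?eqxx //; case: eqP => [->|].
Qed.

Lemma ltn_tperm_adj a b u v : b = a.+1 :> nat ->
  ~~ ((u == a) && (v == b)) -> ~~ ((u == b) && (v == a)) ->
  (tperm a b v < tperm a b u) = (v < u).
Proof.
move=> ab; rewrite !nat_of_tperm -!val_eqE /= ab.
by case: eqVneq => ?; case: eqVneq => ?; case: eqVneq => ?; case: eqVneq => ? //=; lia.
Qed.

Lemma pos_pair_inversions p a b : a < b ->
  (pos_pair p a b \in inversions p) = ((p^-1)%g b < (p^-1)%g a).
Proof.
move=> ab; rewrite /pos_pair; case: ltngtP => [lt_ab|lt_ba|eq_ab]; rewrite inE /= ?permKV.
- by rewrite lt_ab ltnNge (ltnW ab).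
- by rewrite lt_ba ab.
- by move/val_inj/(can_inj (permKV p)): eq_ab ab => ->; rewrite ltnn.
Qed.

Lemma inversions_mul_tperm p a b (xy : 'I_n * 'I_n) : b = a.+1 :> nat -> xy != pos_pair p a b ->
  (xy \in inversions (p * tperm a b)%g) = (xy \in inversions p).
Proof.
move=> ab xy_P; rewrite !inE !permM; case: (ltnP xy.1 xy.2) => //= lt_xy.
case: xy xy_P lt_xy => x y /= xy_P lt_xy.
apply: ltn_tperm_adj => //; apply: contra xy_P => /andP[/eqP px /eqP py];
  rewrite /pos_pair -px -py !permK.
- by rewrite lt_xy.
- by rewrite ltnNge (ltnW lt_xy).
Qed.

Lemma pos_pair_mul_tperm p a b : b = a.+1 :> nat ->
  (pos_pair p a b \in inversions (p * tperm a b)%g) = ~~ (pos_pair p a b \in inversions p).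
Proof.
move=> ab; rewrite pos_pair_inversions ?ab // /pos_pair.
case: ltngtP => [lt_ab|lt_ba|eq_ab]; rewrite inE /= !permM !permKV ?tpermL ?tpermR ab.
- by rewrite lt_ab ltnSn.
- by rewrite lt_ba ltnNge leqnSn.
- by move/val_inj/(can_inj (permKV p)): eq_ab ab => ->; lia.
Qed.

Lemma ninv_mul_tperm p a b : b = a.+1 :> nat ->
  ninv (p * tperm a b)%g =
  if pos_pair p a b \in inversions p then (ninv p).-1 else (ninv p).+1.
Proof.
move=> ab; rewrite /ninv (cardsD1 (pos_pair p a b) (inversions p)).
rewrite (cardsD1 (pos_pair p a b) (inversions _)) pos_pair_mul_tperm //.
have -> : inversions (p * tperm a b)%g :\ pos_pair p a b = inversions p :\ pos_pair p a b.
  by apply/setP => xy; rewrite !in_setD1; case: eqP => //= /eqP; apply: inversions_mul_tperm.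
by case: (_ \in _).
Qed.

Lemma pos_pair_notin p a b : a < b -> pos_pair p a b \notin inversions p ->
  pos_pair p a b = ((p^-1)%g a, (p^-1)%g b).
Proof.
move=> ab; rewrite pos_pair_inversions // -leqNgt leq_eqVlt /pos_pair.
by case/orP=> [/eqP/ord_inj/perm_inj ba|->] //; move: ab; rewrite ba ltnn.
Qed.

Lemma word_prod_cons (ab : 'I_n * 'I_n) w :
  word_prod (ab :: w) = (tperm ab.1 ab.2 * word_prod w)%g.
Proof. by rewrite /word_prod big_cons. Qed.

Lemma word_prod_cat (w1 w2 : seq ('I_n * 'I_n)) :
  word_prod (w1 ++ w2) = (word_prod w1 * word_prod w2)%g.
Proof. by rewrite /word_prod big_cat. Qed.

Lemma ninv_word_le q (u : seq ('I_n * 'I_n)) :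
  adj_word u -> ninv (q * word_prod u)%g <= ninv q + size u.
Proof.
elim: u q => [|ab u IHu] q /=; first by rewrite /word_prod big_nil mulg1 addn0.
case/andP=> /eqP ab_adj adj_u; rewrite word_prod_cons mulgA.
apply: leq_trans (IHu _ adj_u) _; rewrite addnS -addSn leq_add2r ninv_mul_tperm //.
by case: ifP => _; lia.
Qed.

Lemma inversions_word_sub q (u : seq ('I_n * 'I_n)) : adj_word u ->
  ninv (q * word_prod u)%g = ninv q + size u ->
  inversions q \subset inversions (q * word_prod u)%g.
Proof.
elim: u q => [|ab u IHu] q /=; first by rewrite /word_prod big_nil mulg1.
case/andP=> /eqP ab_adj adj_u; rewrite word_prod_cons mulgA => ninv_eq.
have le_u := ninv_word_le (q * tperm ab.1 ab.2)%g adj_u.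
have step := ninv_mul_tperm q ab_adj.
have P_notin : pos_pair q ab.1 ab.2 \notin inversions q.
  by apply/negP => P_in; move: step le_u; rewrite P_in ninv_eq; lia.
apply: subset_trans (IHu _ adj_u _); last by rewrite ninv_eq step (negbTE P_notin) addSnnS.
apply/subsetP => xy xy_in; rewrite inversions_mul_tperm //.
by apply: contraNneq P_notin => <-.
Qed.

Lemma incr_ord_ge (f : 'I_n -> 'I_n) :
  (forall x y : 'I_n, x < y -> f x < f y) -> forall x : 'I_n, x <= f x.
Proof.
move=> f_incr [m lt_mn]; elim: m lt_mn => // m IHm lt_m1n.
have := f_incr (Ordinal (ltnW lt_m1n)) (Ordinal lt_m1n) (ltnSn m).
by have := IHm (ltnW lt_m1n); rewrite /=; lia.
Qed.

Lemma incr_perm1 p : (forall x y : 'I_n, x < y -> p x < p y) -> p = 1%g.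
Proof.
move=> p_incr; have pV_incr (x y : 'I_n) : x < y -> (p^-1)%g x < (p^-1)%g y.
  move=> lt_xy; case: ltngtP => // [lt_yx|/ord_inj/perm_inj eq_xy].
    by have := p_incr _ _ lt_yx; rewrite !permKV; lia.
  by move: lt_xy; rewrite eq_xy ltnn.
apply/permP => x; apply: val_inj; rewrite perm1 /=.
by have := incr_ord_ge p_incr x; have := incr_ord_ge pV_incr (p x); rewrite permK; lia.
Qed.

Lemma incr_adj (f : 'I_n -> nat) :
  (forall a b : 'I_n, b = a.+1 :> nat -> f a < f b) -> forall x y : 'I_n, x < y -> f x < f y.
Proof.
move=> f_adj; suff f_step d (x y : 'I_n) : y = x + d.+1 :> nat -> f x < f y.
  by move=> x y lt_xy; apply: (f_step (y - x).-1); lia.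
elim: d y => [|d IHd] y y_eq; first by apply: f_adj; rewrite y_eq addn1.
have lt_z : x + d.+1 < n by have := ltn_ord y; lia.
by apply: (ltn_trans (IHd (Ordinal lt_z) erefl)); apply: f_adj; rewrite y_eq /=; lia.
Qed.

Lemma ninv_eq0 p : (ninv p == 0) = (p == 1%g).
Proof.
apply/idP/eqP => [|->]; last first.
  by rewrite cards_eq0; apply/eqP/setP => xy; rewrite !inE !perm1; lia.
rewrite cards_eq0 => /eqP inv0; apply: incr_perm1 => x y lt_xy.
case: ltngtP => // [lt_p|/ord_inj/perm_inj eq_xy]; last by move: lt_xy; rewrite eq_xy ltnn.
have : (x, y) \in inversions p by rewrite inE lt_xy.
by rewrite inv0 inE.
Qed.

Lemma ninv1 : ninv (1 : 'S_n)%g = 0.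
Proof. by apply/eqP; rewrite ninv_eq0. Qed.

Lemma exists_descent p : 0 < ninv p ->
  exists a b : 'I_n, b = a.+1 :> nat /\ pos_pair p a b \in inversions p.
Proof.
move=> ninv_pos; case: (pickP [pred ab : 'I_n * 'I_n |
  (ab.2 == ab.1.+1 :> nat) && (pos_pair p ab.1 ab.2 \in inversions p)]) => [[a b]|no_desc].
  by case/andP=> /eqP ab P_in; exists a, b.
suff /eqP p1 : p == 1%g by move: ninv_pos; rewrite p1 lt0n ninv_eq0 eqxx.
rewrite -eq_invg1; apply/eqP/incr_perm1/incr_adj => a b ab.
have := no_desc (a, b); rewrite /= ab eqxx pos_pair_inversions ?ab //= => /negbT.
rewrite -leqNgt leq_eqVlt => /orP[/eqP/ord_inj/perm_inj ab_eq|//].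
by move: ab; rewrite ab_eq; lia.
Qed.

Lemma adj_word_of_perm p :
  exists u, [/\ adj_word u, word_prod u = p & size u <= ninv p].
Proof.
have [k] := ubnP (ninv p); elim: k p => // k IHk p lt_pk.
have [/eqP|ninv_pos] := posnP (ninv p).
  by rewrite ninv_eq0 => /eqP->; exists [::]; rewrite /word_prod big_nil.
have [a [b [ab P_in]]] := exists_descent ninv_pos.
have ninv_q := ninv_mul_tperm p ab; rewrite P_in in ninv_q.
have [|u [adj_u prod_u size_u]] := IHk (p * tperm a b)%g; first by rewrite ninv_q; lia.
exists (u ++ [:: (a, b)]); split.
- by rewrite /adj_word all_cat -/(adj_word u) adj_u /= ab eqxx.
- by rewrite word_prod_cat word_prod_cons prod_u /word_prod big_nil mulg1 -mulgA tperm2 mulg1.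
- by rewrite size_cat addn1; move: size_u; rewrite ninv_q; lia.
Qed.

Lemma size_reduced_word p w : reduced_word p w -> size w = ninv p.
Proof.
case=> adj_w prod_w min_w; apply/eqP; rewrite eqn_leq.
have [u [adj_u prod_u size_u]] := adj_word_of_perm p.
rewrite (leq_trans (min_w u adj_u prod_u)) //.
by have := ninv_word_le 1%g adj_w; rewrite mul1g prod_w ninv1.
Qed.

End Inversions.

Section SupportOfReducedWords.
Variable n : nat.
Implicit Types (p q : 'S_n) (w : seq ('I_n * 'I_n)).

Lemma leq_tperm_adj (a b x i : 'I_n) : b = a.+1 :> nat -> a != i ->
  (tperm a b x <= i) = (x <= i).
Proof.
move=> ab a_i; have {}a_i : (a : nat) != i := a_i.
rewrite nat_of_tperm -!val_eqE /= ab.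
by case: eqVneq => [->|_]; [|case: eqVneq => [->|_]]; lia.
Qed.

Lemma word_prod_stable w (i : 'I_n) : adj_word w -> i \notin [seq ab.1 | ab <- w] ->
  forall x : 'I_n, x <= i -> word_prod w x <= i.
Proof.
elim: w => [|ab w IHw] adj_w i_notin x x_i; first by rewrite /word_prod big_nil perm1.
move: adj_w i_notin => /andP[/eqP ab_adj adj_w]; rewrite inE negb_or => /andP[i_a i_notin].
by rewrite word_prod_cons permM; apply: IHw => //; rewrite leq_tperm_adj // eq_sym.
Qed.

Lemma crosses_of_inversion p (x y : 'I_n) i : (x, y) \in inversions p ->
  p y <= i < p x -> crosses p i.
Proof.
rewrite inE /= => /andP[lt_xy _] /andP[py_i i_px].
have [x_i|i_x] := leqP x i; first by apply/existsP; exists x; rewrite x_i.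
by rewrite crossesC; apply/existsP; exists y; rewrite py_i (ltn_trans i_x lt_xy).
Qed.

Lemma crosses_inversions_sub p q i :
  inversions p \subset inversions q -> crosses p i -> crosses q i.
Proof.
move=> sub_pq cross_p; have := cross_p; rewrite crossesC.
case/existsP: cross_p => x /andP[x_i i_px] /existsP[y /andP[i_y py_i]].
have /(subsetP sub_pq) : (x, y) \in inversions p.
  by rewrite inE /= (leq_ltn_trans x_i i_y) (leq_ltn_trans py_i i_px).
rewrite inE /= => /andP[_ lt_q].
have [i_qx|qx_i] := ltnP i (q x); first by apply/existsP; exists x; rewrite x_i.
by rewrite crossesC; apply/existsP; exists y; rewrite i_y (leq_trans (ltnW lt_q) qx_i).
Qed.

Lemma reduced_word_letter p w1 w2 (a b : 'I_n) :
  reduced_word p (w1 ++ (a, b) :: w2) ->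
  [/\ b = a.+1 :> nat, pos_pair (word_prod w1) a b \notin inversions (word_prod w1)
    & inversions (word_prod w1 * tperm a b)%g \subset inversions p].
Proof.
move=> red_w; have size_w := size_reduced_word red_w; case: red_w => adj_w prod_w _.
move: adj_w; rewrite /adj_word all_cat /= -!/(adj_word _) => /and3P[adj1 /eqP ab adj2].
set p1 := word_prod w1; set p2 := (p1 * tperm a b)%g.
have p_eq : p = (p2 * word_prod w2)%g by rewrite -prod_w word_prod_cat word_prod_cons mulgA.
have := ninv_word_le 1%g adj1; rewrite mul1g ninv1 -/p1 => le1.
have := ninv_word_le p2 adj2; rewrite -p_eq => le2.
have step := ninv_mul_tperm p1 ab; rewrite -/p2 in step.
have P_notin : pos_pair p1 a b \notin inversions p1.
  by apply/negP => P_in; move: step le1 le2 size_w; rewrite P_in size_cat /=; lia.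
split=> //; rewrite p_eq; apply: inversions_word_sub; rewrite // -p_eq.
by move: step le1 le2 size_w; rewrite (negbTE P_notin) size_cat /=; lia.
Qed.

(* The inversion created by the letter (a, b) straddles the cut at a, and it
   survives in p because a reduced word only adds inversions. *)
Lemma crosses_reduced_word p w (a b : 'I_n) :
  reduced_word p w -> (a, b) \in w -> crosses p a.
Proof.
move=> red_w /splitPr ab_in.
case: ab_in red_w => w1 w2 /reduced_word_letter[ab P_notin sub].
apply: crosses_inversions_sub sub _; move: P_notin; set p1 := word_prod w1 => P_notin.
have lt_ab : a < b by rewrite ab.
apply: (@crosses_of_inversion _ ((p1^-1)%g a) ((p1^-1)%g b)).
  by rewrite -(pos_pair_notin lt_ab P_notin) pos_pair_mul_tperm.
by rewrite !permM !permKV tpermL tpermR ab leqnn ltnSn.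
Qed.

Lemma mem_reduced_word p w (i : 'I_n) : reduced_word p w ->
  (i \in [seq ab.1 | ab <- w]) = crosses p i.
Proof.
move=> red_w; apply/idP/idP => [/mapP[[a b] ab_in ->]|].
  exact: crosses_reduced_word red_w ab_in.
case: red_w => adj_w prod_w _; rewrite -prod_w; apply: contraLR => i_notin.
apply/existsPn => x; apply/negP => /andP[x_i].
by rewrite ltnNge (word_prod_stable adj_w i_notin x_i).
Qed.

Lemma size_undup_reduced_word p w : reduced_word p w ->
  size (undup w) = #|[set i : 'I_n | crosses p i]|.
Proof.
move=> red_w; have adj_w : adj_word w by case: red_w.
have fst_inj : {in undup w &, injective (fun ab : 'I_n * 'I_n => ab.1)}.
  move=> [a1 b1] [a2 b2]; rewrite !mem_undup => /(allP adj_w)/eqP b1_eq /(allP adj_w)/eqP b2_eq.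
  by move=> /= a_eq; rewrite a_eq in b1_eq *; congr (_, _); apply: ord_inj; rewrite b1_eq.
rewrite -(size_map (fun ab : 'I_n * 'I_n => ab.1)) -(card_uniqP _); last first.
  by rewrite (map_inj_in_uniq fst_inj) undup_uniq.
apply: eq_card => i; rewrite inE -(mem_reduced_word i red_w).
by apply/mapP/mapP => -[ab ab_in ->]; exists ab; rewrite ?mem_undup in ab_in *.
Qed.

End SupportOfReducedWords.

Section DyckPath.
Variables (n : nat) (c : seq nat).
Hypothesis Hc : linNakayama n c.

Local Notation pend := (proj_end c).
Local Notation h := (dyck_height n c).

(* [dyck_reach y i]: the projective e_i A has a term 2 i + k = y, k < c_i, in
   the maximum defining [dyck_height]. *)
Definition dyck_reach (y i : nat) : bool := (2 * i <= y) && (y < i + pend i).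

Lemma dyck_height_first_reach y m : y <= 2 * n -> m <= n -> dyck_reach y m ->
  (forall j, j < m -> ~~ dyck_reach y j) -> h (2 * n - y) = y - 2 * m.
Proof.
move=> y_le m_le reach_m before_m; rewrite /dyck_height (_ : 2 * n - (2 * n - y) = y); last by lia.
apply/eqP; rewrite eqn_leq; apply/andP; split.
  apply/bigmax_leqP => i _; apply/bigmax_leqP => k _; case: ifP => // /eqP yE.
  have reach_i : dyck_reach y i by rewrite /dyck_reach /proj_end; have := ltn_ord k; lia.
  have : m <= i by rewrite leqNgt; apply: contraL reach_i; apply: before_m.
  lia.
have k_lt : y - 2 * m < nth 0 c m by move: reach_m; rewrite /dyck_reach /proj_end; lia.
apply: (bigmax_sup (Ordinal (m_le : m < n.+1))) => //=.
apply: (bigmax_sup (Ordinal k_lt)) => //=.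
by move: reach_m; rewrite /dyck_reach => /andP[le_m _]; rewrite subnKC // eqxx.
Qed.

Lemma dyck_heightP y : y <= 2 * n -> exists m, [/\ m <= n, dyck_reach y m,
  forall j, j < m -> ~~ dyck_reach y j & h (2 * n - y) = y - 2 * m].
Proof.
move=> y_le; have reach_half : dyck_reach y (y %/ 2).
  rewrite /dyck_reach /proj_end; case: (ltnP (y %/ 2) n) => [/(nakayama_ge2 Hc)|n_le]; first lia.
  have -> : y %/ 2 = n by lia.
  by rewrite (nakayama_last Hc); lia.
have [m reach_m min_m] := ex_minnP (ex_intro (dyck_reach y) _ reach_half).
have m_le : m <= n by have := min_m _ reach_half; lia.
have before_m j : j < m -> ~~ dyck_reach y j by move=> lt_jm; apply: contraL lt_jm => /min_m; lia.
by exists m; split => //; apply: dyck_height_first_reach.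
Qed.

Lemma valley_jump X : valley h n X -> exists a,
  [/\ a < n, jump c a, X = 2 * n - (a + pend a) & h X = nth 0 c a - 2].
Proof.
case=> /andP[X_pos X_lt] hL hR; set y := 2 * n - X.
have [|m [m_le reach_m min_m hX]] := @dyck_heightP y; first by rewrite /y; lia.
have [|mL [_ reach_mL _ hXL]] := @dyck_heightP y.+1; first by rewrite /y; lia.
have [|mR [_ reach_mR _ hXR]] := @dyck_heightP y.-1; first by rewrite /y; lia.
have XE : X = 2 * n - y by rewrite /y; lia.
rewrite (_ : X.-1 = 2 * n - y.+1) ?hXL ?XE ?hX in hL; last by rewrite /y; lia.
rewrite (_ : X.+1 = 2 * n - y.-1) ?hXR ?XE ?hX in hR; last by rewrite /y; lia.
have mR_eq : m = mR.+1 by move: reach_m reach_mR; rewrite /dyck_reach; lia.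
have mL_eq : mL = m by move: reach_m reach_mL; rewrite /dyck_reach; lia.
have := min_m mR; rewrite mR_eq ltnSn => /(_ isT) not_reach.
move: reach_mR reach_mL; rewrite /dyck_reach mL_eq mR_eq => reach_mR reach_mL.
have yE : y = mR + pend mR by move: not_reach reach_mR; rewrite /dyck_reach; lia.
have mR_lt : mR < n by lia.
exists mR; split => //.
- by move: reach_mL; rewrite /jump yE; lia.
- by rewrite XE yE.
- by rewrite XE hX yE mR_eq; have := proj_end_gt Hc mR_lt; rewrite /proj_end; lia.
Qed.

Lemma jump_valley a : a < n -> jump c a ->
  valley h n (2 * n - (a + pend a)) /\ h (2 * n - (a + pend a)) = nth 0 c a - 2.
Proof.
move=> a_n jump_a; have a2 := proj_end_gt Hc a_n; have a1_le := proj_end_le Hc a_n.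
move: jump_a; rewrite /jump => jump_a.
have not_reach y j : j <= a -> j + pend a <= y -> ~~ dyck_reach y j.
  by move=> j_le le_y; have := proj_end_mono Hc j_le; rewrite /dyck_reach; lia.
have h0 : h (2 * n - (a + pend a)) = a + pend a - 2 * a.+1.
  apply: dyck_height_first_reach => [|||j j_lt]; rewrite ?/dyck_reach; try lia.
  by apply: not_reach; lia.
have hL : h (2 * n - (a + pend a).+1) = (a + pend a).+1 - 2 * a.+1.
  apply: dyck_height_first_reach => [|||j j_lt]; rewrite ?/dyck_reach; try lia.
  by apply: not_reach; lia.
have hR : h (2 * n - (a + pend a).-1) = (a + pend a).-1 - 2 * a.
  apply: dyck_height_first_reach => [|||j j_lt]; rewrite ?/dyck_reach; try lia.
  by apply: not_reach; lia.
split; last by rewrite h0 /proj_end; lia.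
split; first by apply/andP; lia.
- by rewrite (_ : _.-1 = 2 * n - (a + pend a).+1) ?hL ?h0; lia.
- by rewrite (_ : _.+1 = 2 * n - (a + pend a).-1) ?hR ?h0; lia.
Qed.

End DyckPath.

Section BJSPermutation.
Variables (n : nat) (c : seq nat) (pi : 'S_n).
Hypothesis Hc : linNakayama n c.
Hypothesis Hpi : BJS (dyck_height n c) pi.

Local Notation pend := (proj_end c).
Local Notation h := (dyck_height n c).

Lemma BJS_valleyPos (p : 'I_n) : valleyPos h n p ->
  exists a, [/\ a < n, jump c a, p = n - pend a :> nat & pi p = n - a.+1 :> nat].
Proof.
case=> X [valX pE]; have [a [a_n jump_a XE hX]] := valley_jump Hc valX.
have piE := Hpi.1 X valX p pE; rewrite hX XE in pE piE.
have a2 := proj_end_gt Hc a_n; have le_n := proj_end_le Hc a_n.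
by exists a; split => //; move: pE piE jump_a a2 le_n; rewrite /jump /proj_end; lia.
Qed.

Lemma BJS_crosses_valleyPos i : crosses pi i ->
  exists2 x : 'I_n, valleyPos h n x & x <= i < pi x.
Proof.
move=> cross; have := cross; rewrite crossesC => /existsP[y /andP[i_y py_i]].
case/existsP: cross => x /andP[x_i i_px].
have [vx|not_vx] := classic (valleyPos h n x); first by exists x; rewrite ?x_i.
have [/BJS_valleyPos[a [a_n _ yE pyE]]|not_vy] := classic (valleyPos h n y).
  by have := proj_end_gt Hc a_n; move: yE pyE i_y py_i; rewrite /proj_end; lia.
have := Hpi.2 x y (leq_ltn_trans x_i i_y) not_vx not_vy; lia.
Qed.

Lemma BJS_jump a : a < n -> jump c a ->
  exists p : 'I_n, p = n - pend a :> nat /\ pi p = n - a.+1 :> nat.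
Proof.
move=> a_n jump_a; have [valX hX] := jump_valley Hc a_n jump_a.
have a2 := proj_end_gt Hc a_n; have le_n := proj_end_le Hc a_n.
move: jump_a; rewrite /jump => jump_a; have p_lt : n - pend a < n by lia.
have pE : (Ordinal p_lt).+1 = ((2 * n - (a + pend a)) - h (2 * n - (a + pend a)))./2.
  by rewrite hX /=; move: jump_a a2 le_n; rewrite /proj_end; lia.
exists (Ordinal p_lt); split => //; have := Hpi.1 _ valX _ pE; rewrite hX.
by move: jump_a a2 le_n; rewrite /proj_end; lia.
Qed.

Lemma crosses_BJS (i : 'I_n) : crosses pi i = ext_label n c (rev_ord i).
Proof.
apply/idP/existsP => [/BJS_crosses_valleyPos[x] | [a /and3P[jump_a a_b b_a]]].
  case/BJS_valleyPos=> a [a_n jump_a xE pxE] /andP[x_i i_px].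
  exists (Ordinal a_n); rewrite /= jump_a /=; have := proj_end_le Hc a_n.
  by move: xE pxE x_i i_px jump_a; rewrite /jump /proj_end; lia.
have [p [pE piE]] := BJS_jump (ltn_ord a) jump_a.
apply/existsP; exists p; have := proj_end_le Hc (ltn_ord a).
by move: pE piE a_b b_a jump_a; rewrite /jump /proj_end /=; lia.
Qed.

End BJSPermutation.

Theorem mainTheorem2 (K : fieldType) (n : nat) (pi : 'S_n) (c : seq nat) :
  1 <= n ->
  avoids321 pi ->
  linNakayama n c ->
  BJS (dyck_height n c) pi ->
  forall w : seq ('I_n * 'I_n), reduced_word pi w ->
  Ext1_iso_Kpow (K := K) c (actJ K c) (actJ K c) (support_size_of w).
Proof.
move=> _ _ Hc Hpi w red_w.
rewrite /support_size_of (size_undup_reduced_word red_w).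
have -> : [set i : 'I_n | crosses pi i] = @rev_ord n @^-1: ext_labels n c.
  by apply/setP => i; rewrite !inE (crosses_BJS Hc Hpi).
by rewrite card_preimset; [exact: Ext1_actJ | exact: rev_ord_inj].
Qed.
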